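(* Let $(X,\mathrm{dist})$ be a metric space, $\Sigma$ a metric space, and $\{U_\sigma(t,\tau)\}_{\sigma\in\Sigma}$ a family of processes on $X$. If the family is uniformly asymptotically compact, then $A^\star_\Sigma$ is a compact uniformly attracting set.
   Context: A process on $X$ is a family of maps $U(t,\tau):X\to X$, indexed by reals $t\ge\tau$, with $U(\tau,\tau)=\mathrm{id}_X$ and $U(t,\tau)=U(t,s)U(s,\tau)$ for $t\ge s\ge\tau$; no continuity is assumed. For nonempty $B,C\subset X$, $\delta_X(B,C)=\sup_{x\in B}\inf_{\xi\in C}\mathrm{dist}(x,\xi)$. A set $K\subset X$ is uniformly attracting if for every bounded $C\subset X$, $\lim_{t-\tau\to\infty}\sup_{\sigma\in\Sigma}\delta_X(U_\sigma(t,\tau)C,K)=0$. The family is uniformly asymptotically compact if there exists a compact uniformly attracting set. $\mathfrak{C}_\Sigma$ is the collection of all sequences $y_n=U_{\sigma_n}(t_n,\tau_n)x_n$ with $x_n$ a bounded sequence in $X$, $\sigma_n\in\Sigma$, $t_n-\tau_n\to\infty$, and $A^\star_\Sigma=\{x\in X: y_n\to x$ along a subsequence, for some $y_n\in\mathfrak{C}_\Sigma\}$. *)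

From HB Require Import structures.
From mathcomp Require Import all_boot all_order all_algebra.
From mathcomp Require Import all_classical all_reals all_analysis.
Set Implicit Arguments. Unset Strict Implicit. Unset Printing Implicit Defensive.
Import Order.TTheory GRing.Theory Num.Theory.
Local Open Scope classical_set_scope.
Local Open Scope ring_scope.

Section Defs.
Context {R : realType}.

(** A process on X: U t tau : X -> X for t >= tau (values for t < tau are
    irrelevant), with U(tau,tau) = id and U(t,tau) = U(t,s) U(s,tau). *)
Definition is_process {X : Type} (U : R -> R -> X -> X) : Prop :=
  (forall tau : R, U tau tau = id) /\
  (forall t s tau : R, tau <= s -> s <= t -> U t tau = U t s \o U s tau).

Definition mbounded {X : metricType R} (C : set X) : Prop :=
  exists (x0 : X) (r : R), C `<=` [set y | mdist x0 y <= r].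

Definition dist_to_set {X : metricType R} (x : X) (C : set X) : \bar R :=
  ereal_inf [set (mdist x xi)%:E | xi in C].

Definition hdelta {X : metricType R} (B C : set X) : \bar R :=
  ereal_sup [set dist_to_set x C | x in B].

Definition unif_attracting {X : metricType R} {Sigma : Type}
  (U : Sigma -> R -> R -> X -> X) (K : set X) : Prop :=
  forall C : set X, mbounded C ->
  forall eps : R, 0 < eps ->
  exists T : R, forall t tau : R, tau <= t -> T <= t - tau ->
    (ereal_sup [set hdelta (U sigma t tau @` C) K | sigma in [set: Sigma]]
      <= eps%:E)%E.

Definition unif_asymp_compact {X : metricType R} {Sigma : Type}
  (U : Sigma -> R -> R -> X -> X) : Prop :=
  exists K : set X, compact K /\ unif_attracting U K.

Definition in_CSigma {X : metricType R} {Sigma : Type}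
  (U : Sigma -> R -> R -> X -> X) (y : nat -> X) : Prop :=
  exists (x : nat -> X) (sigma : nat -> Sigma) (t tau : nat -> R),
    mbounded (range x) /\
    (forall n, tau n <= t n) /\
    (fun n => t n - tau n) @ \oo --> +oo /\
    (forall n, y n = U (sigma n) (t n) (tau n) (x n)).

Definition Astar {X : metricType R} {Sigma : Type}
  (U : Sigma -> R -> R -> X -> X) : set X :=
  [set x | exists y : nat -> X, in_CSigma U y /\
     exists phi : nat -> nat, (forall n, (phi n < phi n.+1)%N) /\
       (y \o phi) @ \oo --> x].
End Defs.

From HB Require Import structures.
From mathcomp Require Import all_boot all_order all_algebra.
From mathcomp Require Import all_classical all_reals all_analysis.
From mathcomp Require Import lra.
Import Order.TTheory GRing.Theory Num.Theory.
Local Open Scope classical_set_scope.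
Local Open Scope ring_scope.

(* Fix a compact uniformly attracting set K.  Sequences of C_Sigma eventually
   come arbitrarily close to K; hence A*_Sigma is contained in K and, K being
   compact, every sequence of C_Sigma has a subsequence converging in A*_Sigma,
   which yields uniform attraction of A*_Sigma by contradiction.  Compactness
   then reduces to closedness: restarting each trajectory at a time after which
   it is 1-close to K, every point of A*_Sigma is a limit of arbitrarily long
   trajectories issued from the bounded 1-neighbourhood of K; this property is
   closed, and a diagonal sequence shows that it implies membership in
   A*_Sigma. *)

Lemma increasing_geq_id {phi : nat -> nat} :
  (forall n, (phi n < phi n.+1)%N) -> forall n, (n <= phi n)%N.
Proof. by move=> phiS; elim=> // n IHn; apply: leq_ltn_trans (phiS n). Qed.

Section real_sequences.
Context {R : realType}.

Lemma near_inv_succ_lt (e : R) : 0 < e ->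
  exists N, forall n, (N <= n)%N -> n.+1%:R^-1 < e.
Proof.
move=> e0; have [N _ HN] := nbhs_infty_ger e^-1.
exists N => n /HN le_n; rewrite -[e]invrK ltf_pV2 ?posrE ?invr_gt0 ?ltr0n //.
by apply: le_lt_trans le_n _; rewrite ltr_nat.
Qed.

Lemma cvgry_ge_nat (u : nat -> R) : (forall n, n%:R <= u n) -> u @ \oo --> +oo.
Proof.
move=> ge_u; apply/cvgryPge => A; have [N _ HN] := nbhs_infty_ger A.
by exists N => // n /HN /le_trans; apply.
Qed.

End real_sequences.

Section metric_sequences.
Context {R : realType} {X : metricType R}.

Lemma closure_mdistP (S : set X) (z : X) :
  closure S z <-> forall e, 0 < e -> exists2 k, S k & mdist z k < e.
Proof.
split=> [clSz e e0|near_z B /nbhs_ballP [e e0 sB]].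
  by have [k [Sk]] := clSz _ (nbhsx_ballx z e e0); rewrite ballEmdist; exists k.
by have [k Sk zk] := near_z e e0; exists k; split => //; apply: sB; rewrite ballEmdist.
Qed.

Lemma subseq_cvg_frequently_near (y : nat -> X) (p : X) :
  (forall e, 0 < e -> forall N, exists2 n, (N <= n)%N & mdist p (y n) < e) ->
  exists phi : nat -> nat, (forall n, (phi n < phi n.+1)%N) /\ (y \o phi) @ \oo --> p.
Proof.
move=> freq.
have /choice [g gP] : forall Nm : nat * nat, exists n,
    (Nm.1 <= n)%N /\ mdist p (y n) < Nm.2.+1%:R^-1.
  move=> [N m]; have [|n Nn pn] := freq m.+1%:R^-1 _ N; last by exists n.
  by rewrite invr_gt0 ltr0n.
pose fix phi m := if m is m'.+1 then g ((phi m').+1, m) else g (0, 0)%N.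
have phi_near m : mdist p (y (phi m)) < m.+1%:R^-1.
  by case: m => [|m]; [exact: (gP (0, 0)%N).2 | exact: (gP (_, m.+1)).2].
exists phi; split=> [n|]; first exact: (gP ((phi n).+1, n.+1)).1.
apply/metricType_numDomainType.cvgrPdist_lt => e e0; have [N HN] := near_inv_succ_lt _ e0.
by exists N => // n /HN; apply: lt_trans (phi_near n).
Qed.

Lemma compact_subseq_cvg {K : set X} {k : nat -> X} : compact K -> (forall n, K (k n)) ->
  exists2 p, K p & exists phi : nat -> nat,
    (forall n, (phi n < phi n.+1)%N) /\ (k \o phi) @ \oo --> p.
Proof.
move=> cK Kk.
have kK : (k @ \oo) K by exists 0%N => // n _; exact: Kk.
have [p [Kp clp]] := cK (k @ \oo) _ kK.
exists p => //; apply: subseq_cvg_frequently_near => e e0 N.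
have tail : (k @ \oo) (k @` [set n | (N <= n)%N]) by exists N => // n Nn; exists n.
have [q [[n /= Nn <-]]] := clp _ _ tail (nbhsx_ballx p e e0).
by rewrite ballEmdist; exists n.
Qed.

Lemma compact_mbounded (x0 : X) {K : set X} : compact K -> mbounded K.
Proof.
move=> cK; apply: contrapT => unbounded.
have /choice [k kP] : forall n : nat, exists y, K y /\ n%:R < mdist x0 y.
  move=> n; apply: contrapT => Kn; apply: unbounded; exists x0, n%:R => y Ky /=.
  by rewrite leNgt; apply/negP => ny; apply: Kn; exists y.
have [p _ [phi [phiS /metricType_numDomainType.cvgrPdist_lt/(_ 1 ltr01) [N1 _ HN1]]]] :=
  compact_subseq_cvg cK (fun n => (kP n).1).
have [N2 _ HN2] := nbhs_infty_ger (mdist x0 p + 1).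
pose n := maxn N1 N2.
have := HN1 n (leq_maxl _ _); have := HN2 n (leq_maxr _ _); have := (kP (phi n)).2.
have : (n%:R : R) <= (phi n)%:R by rewrite ler_nat increasing_geq_id.
have := metric_triangle x0 p (k (phi n)); rewrite /=; lra.
Qed.

Lemma mboundedS (A B : set X) : A `<=` B -> mbounded B -> mbounded A.
Proof. by move=> AB [x0 [r Br]]; exists x0, r => x /AB /Br. Qed.

Lemma mbounded_thicken {B : set X} (r : R) :
  mbounded B -> mbounded [set x | exists2 b, B b & mdist x b < r].
Proof.
move=> [x0 [s sB]]; exists x0, (s + r) => x [b /sB /= b_s xb].
by have := metric_triangle x0 b x; rewrite (metric_sym b x); lra.
Qed.

End metric_sequences.

Lemma process_restart {R : realType} {X : Type} {V : R -> R -> X -> X} {t s tau : R} {x : X} :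
  is_process V -> tau <= s -> s <= t -> V t s (V s tau x) = V t tau x.
Proof. by move=> [_ VV] tau_s s_t; rewrite (VV t s tau). Qed.

Section attraction.
Context {R : realType} {X : metricType R} {Sigma : Type}
  {U : Sigma -> R -> R -> X -> X}.

Lemma unif_attracting_near {K C : set X} {e : R} :
  unif_attracting U K -> mbounded C -> 0 < e -> exists2 T : R, 0 <= T &
  forall t tau, tau <= t -> T <= t - tau -> forall sigma x, C x ->
    exists2 k, K k & mdist (U sigma t tau x) k < e.
Proof.
move=> attrK bC e0; have [|T HT] := attrK C bC (e / 2); first by rewrite divr_gt0.
exists (Num.max T 0) => [|t tau tau_t]; first by rewrite le_max lexx orbT.
rewrite ge_max => /andP [T_t _] sigma x Cx.
have : (dist_to_set (U sigma t tau x) K < e%:E)%E.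
  have half_lt : ((e / 2)%:E < e%:E)%E by rewrite lte_fin; lra.
  apply: le_lt_trans half_lt.
  apply: le_trans (HT t tau tau_t T_t).
  apply: le_trans (ereal_sup_ubound _); last by exists sigma.
  by apply: ereal_sup_ubound; exists (U sigma t tau x) => //; exists x.
by move=> /ereal_inf_lt [_ [k Kk <-]]; rewrite lte_fin; exists k.
Qed.

Lemma unif_attracting_of_near (A : set X) :
  (forall C, mbounded C -> forall e, 0 < e -> exists T : R,
    forall t tau, tau <= t -> T <= t - tau -> forall sigma x, C x ->
      exists2 a, A a & mdist (U sigma t tau x) a <= e) ->
  unif_attracting U A.
Proof.
move=> nearA C bC e e0; have [T HT] := nearA C bC e e0.
exists T => t tau tau_t T_t; apply: ge_ereal_sup => _ [sigma _ <-].
apply: ge_ereal_sup => _ [_ [x Cx <-] <-].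
have [a Aa xa] := HT t tau tau_t T_t sigma x Cx.
apply: le_trans (ereal_inf_lbound _) _; first by exists a.
by rewrite lee_fin.
Qed.

Lemma in_CSigma_near {K : set X} {y : nat -> X} {e : R} :
  unif_attracting U K -> in_CSigma U y -> 0 < e ->
  exists N, forall n, (N <= n)%N -> exists2 k, K k & mdist (y n) k < e.
Proof.
move=> attrK [x [sigma [t [tau [bx [tau_t [t_tau yE]]]]]]] e0.
have [T _ HT] := unif_attracting_near attrK bx e0.
have [N _ HN] := (cvgryPge _).1 t_tau T.
by exists N => n Nn; rewrite yE; apply: HT; [exact: tau_t | exact: HN | exists n].
Qed.

Lemma in_CSigma_of {B : set X} (sigma : nat -> Sigma) (x : nat -> X) (t tau : nat -> R) :
  mbounded B -> (forall n, B (x n)) -> (forall n, tau n <= t n) ->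
  (forall n, n%:R <= t n - tau n) ->
  in_CSigma U (fun n => U (sigma n) (t n) (tau n) (x n)).
Proof.
move=> bB Bx tau_t t_tau; exists x, sigma, t, tau; split.
  by apply: mboundedS bB => _ [n _ <-].
by split=> //; split=> //; apply: cvgry_ge_nat.
Qed.

End attraction.

Section Astar.
Context {R : realType} {X : metricType R} {Sigma : Type}
  {U : Sigma -> R -> R -> X -> X}.

Lemma in_CSigma_subseq_cvg {K : set X} {y : nat -> X} :
  compact K -> unif_attracting U K -> in_CSigma U y ->
  exists (p : X) (phi : nat -> nat),
    (forall n, (phi n < phi n.+1)%N) /\ (y \o phi) @ \oo --> p.
Proof.
move=> cK attrK Cy.
have /choice [g gP] : forall m : nat, exists nk : nat * X,
    [/\ (m <= nk.1)%N, K nk.2 & mdist (y nk.1) nk.2 < m.+1%:R^-1].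
  move=> m; have m_pos : 0 < m.+1%:R^-1 :> R by rewrite invr_gt0 ltr0n.
  have [N HN] := in_CSigma_near attrK Cy m_pos.
  have [k Kk yk] := HN (maxn N m) (leq_maxl _ _).
  by exists (maxn N m, k); split=> //=; rewrite leq_maxr.
have Kg m : K (g m).2 by case: (gP m).
have [p _ [phi [phiS /metricType_numDomainType.cvgrPdist_lt cvg_p]]] :=
  compact_subseq_cvg cK Kg.
exists p; apply: subseq_cvg_frequently_near => e e0 N.
have e2 : 0 < e / 2 by rewrite divr_gt0.
have [N1 _ HN1] := cvg_p _ e2; have [N2 HN2] := near_inv_succ_lt _ e2.
pose m := maxn N (maxn N1 N2).
have [N_m N1_m N2_m] : [/\ N <= m, N1 <= m & N2 <= m]%N.
  by rewrite !leq_max !leqnn !orbT.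
have m_phi : (m <= phi m)%N := increasing_geq_id phiS m.
have [g_ge _ y_g] := gP (phi m).
exists (g (phi m)).1; first by rewrite (leq_trans N_m) // (leq_trans m_phi).
have := HN1 m N1_m; have := HN2 (phi m) (leq_trans N2_m m_phi).
have := metric_triangle p (g (phi m)).2 (y (g (phi m)).1).
rewrite (metric_sym (g _).2) /=; move: y_g; set r := (phi m).+1%:R^-1; lra.
Qed.

Lemma Astar_sub {K : set X} : compact K -> unif_attracting U K -> Astar U `<=` K.
Proof.
move=> cK attrK z [y [Cy [phi [phiS /metricType_numDomainType.cvgrPdist_lt cvg_z]]]].
apply: (compact_closed (@metric_hausdorff _ X) cK); apply/closure_mdistP => e e0.
have e2 : 0 < e / 2 by rewrite divr_gt0.
have [N1 HN1] := in_CSigma_near attrK Cy e2; have [N2 _ HN2] := cvg_z _ e2.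
pose m := maxn N1 N2.
have [k Kk yk] := HN1 (phi m) (leq_trans (leq_maxl _ _) (increasing_geq_id phiS m)).
exists k => //; have := HN2 m (leq_maxr _ _).
have := metric_triangle z (y (phi m)) k; rewrite /=; lra.
Qed.

Lemma Astar_unif_attracting {K : set X} :
  compact K -> unif_attracting U K -> unif_attracting U (Astar U).
Proof.
move=> cK attrK; apply: unif_attracting_of_near => C bC e e0.
apply: contrapT => far.
have /choice [q qP] : forall n : nat, exists q : Sigma * X * R * R,
    [/\ C q.1.1.2, q.2 <= q.1.2, n%:R <= q.1.2 - q.2 &
      forall a, Astar U a -> e < mdist (U q.1.1.1 q.1.2 q.2 q.1.1.2) a].
  move=> n; apply: contrapT => no_q; apply: far; exists n%:R => t tau tau_t n_t sigma x Cx.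
  apply: contrapT => no_a; apply: no_q; exists (sigma, x, t, tau); split=> // a Aa.
  by rewrite ltNge; apply/negP => ae; apply: no_a; exists a.
pose sigma n := (q n).1.1.1; pose x n := (q n).1.1.2.
pose t n := (q n).1.2; pose tau n := (q n).2.
pose y n := U (sigma n) (t n) (tau n) (x n).
have Cy : in_CSigma U y.
  by apply: (in_CSigma_of sigma x t tau bC) => n; case: (qP n).
have [p [phi [phiS cvg_p]]] := in_CSigma_subseq_cvg cK attrK Cy.
have Ap : Astar U p by exists y; split=> //; exists phi.
move/metricType_numDomainType.cvgrPdist_lt : cvg_p => /(_ _ e0) [N _ HN].
have [_ _ _ /(_ p Ap)] := qP (phi N); have := HN N (leqnn N).
by rewrite /= metric_sym; lra.
Qed.

Definition long_time_limit (B : set X) (z : X) : Prop :=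
  forall e, 0 < e -> forall M : R, exists sigma x t tau,
    [/\ B x, tau <= t, M <= t - tau & mdist z (U sigma t tau x) < e].

Lemma long_time_limit_closed (B : set X) : closed (long_time_limit B).
Proof.
move=> z /closure_mdistP near_z e e0 M.
have e2 : 0 < e / 2 by rewrite divr_gt0.
have [a La za] := near_z _ e2.
have [sigma [x [t [tau [Bx tau_t M_t ax]]]]] := La _ e2 M.
exists sigma, x, t, tau; split=> //.
by have := metric_triangle z a (U sigma t tau x); lra.
Qed.

Lemma Astar_of_long_time_limit {B : set X} : mbounded B -> long_time_limit B `<=` Astar U.
Proof.
move=> bB z Lz.
have /choice [q qP] : forall m : nat, exists q : Sigma * X * R * R,
    [/\ B q.1.1.2, q.2 <= q.1.2, m%:R <= q.1.2 - q.2 &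
      mdist z (U q.1.1.1 q.1.2 q.2 q.1.1.2) < m.+1%:R^-1].
  move=> m; have [|sigma [x [t [tau ?]]]] := Lz m.+1%:R^-1 _ m%:R.
    by rewrite invr_gt0 ltr0n.
  by exists (sigma, x, t, tau).
exists (fun m => U (q m).1.1.1 (q m).1.2 (q m).2 (q m).1.1.2); split.
  by apply: (in_CSigma_of _ _ _ _ bB) => m; case: (qP m).
exists id; split=> //; apply/metricType_numDomainType.cvgrPdist_lt => e e0.
have [N HN] := near_inv_succ_lt _ e0.
by exists N => // m /HN; case: (qP m) => _ _ _ /lt_trans; apply.
Qed.

Lemma Astar_sub_long_time_limit {K : set X} :
  (forall sigma, is_process (U sigma)) -> unif_attracting U K ->
  Astar U `<=` long_time_limit [set x | exists2 k, K k & mdist x k < 1].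
Proof.
move=> procU attrK a [y [[x [sigma [t [tau [bx [tau_t [t_tau yE]]]]]]] [phi [phiS cvg_a]]]].
move=> e e0 M; have [T T0 HT] := unif_attracting_near attrK bx ltr01.
have [N1 _ HN1] := (cvgryPge _).1 t_tau (T + `|M|).
move/metricType_numDomainType.cvgrPdist_lt : cvg_a => /(_ _ e0) [N2 _ HN2].
pose j := phi (maxn N1 N2).
have j_long : T + `|M| <= t j - tau j.
  exact: HN1 (leq_trans (leq_maxl _ _) (increasing_geq_id phiS _)).
have M_le := ler_norm M; have M_ge := normr_ge0 M.
exists (sigma j), (U (sigma j) (tau j + T) (tau j) (x j)), (t j), (tau j + T).
split; [apply: HT; [lra | lra | by exists j] | lra | lra |].
rewrite (process_restart (procU (sigma j))); [| lra | lra].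
by have := HN2 _ (leq_maxr N1 N2); rewrite /= yE.
Qed.

Lemma Astar_closed {K : set X} : compact K -> (forall sigma, is_process (U sigma)) ->
  unif_attracting U K -> closed (Astar U).
Proof.
move=> cK procU attrK z clz.
have bK1 := mbounded_thicken 1 (compact_mbounded z cK).
apply: (Astar_of_long_time_limit bK1); apply: long_time_limit_closed.
exact: closureS (Astar_sub_long_time_limit procU attrK) _ clz.
Qed.

End Astar.

Theorem proposition2p11 (R : realType) (X : metricType R) (Sigma : metricType R)
  (U : Sigma -> R -> R -> X -> X) :
  (forall sigma : Sigma, is_process (U sigma)) ->
  unif_asymp_compact U ->
  compact (Astar U) /\ unif_attracting U (Astar U).
Proof.
move=> procU [K [cK attrK]]; split; last exact: Astar_unif_attracting cK attrK.
exact: subclosed_compact (Astar_closed cK procU attrK) cK (Astar_sub cK attrK).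
Qed.
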